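(* Let $K$ be a fan-like sphere with vertex set $[m]$, and let $\Sigma$ be a complete fan over $\operatorname{wed}_1(K)$, whose vertex set is $\{0,1,\dots,m\}$ (where $0$ and $1$ denote the two new vertices created from the vertex $1$ of $K$). Choose a nonzero point $x_i$ on each 1-cone of $\Sigma$ corresponding to $i\in\{0,\dots,m\}$, and let $\widehat X=(\widehat x_0,\widehat x_1,\dots,\widehat x_m)$ be a Shephard diagram for $\Sigma$ with respect to $X=(x_0,\dots,x_m)$. Then $(\widehat x_1,\widehat x_2,\dots,\widehat x_m)$ and $(\widehat x_0,\widehat x_2,\dots,\widehat x_m)$ are Shephard diagrams for the projected fans $\operatorname{proj}_0\Sigma$ and $\operatorname{proj}_1\Sigma$ respectively (with respect to the images of the corresponding points $x_j$ in the quotient spaces). Furthermore \[S(\Sigma,\widehat X)=S(\operatorname{proj}_0\Sigma,(\widehat x_1,\dots,\widehat x_m))\cap S(\operatorname{proj}_1\Sigma,(\widehat x_0,\widehat x_2,\dots,\widehat x_m)).\]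
   Context: Simplicial wedge: $\operatorname{wed}_v(K)=(I\star\operatorname{link}_K\{v\})\cup(\partial I\star(K\setminus\{v\}))$, $I$ a 1-simplex on two new vertices, $\partial I$ its 0-skeleton, $\star$ the join, $K\setminus\{v\}$ the induced subcomplex on the other vertices. A fan-like sphere is a simplicial $(n-1)$-sphere underlying a complete simplicial fan in $\mathbb{R}^n$. Fans are simplicial; a fan over a complex $L$ has its 1-cones indexed by the vertices of $L$ and cones spanned by faces; it is complete if its cones cover $\mathbb{R}^n$. For a cone $\sigma$ of $\Sigma$, the projected fan $\operatorname{proj}_\sigma\Sigma$ is the fan in $\mathbb{R}^n/\operatorname{span}\sigma$ formed by the images of the cones of $\Sigma$ containing $\sigma$ (here $\operatorname{proj}_i$ means projection with respect to the 1-cone of vertex $i$). Linear transform: for a sequence $X=(x_1,\dots,x_m)$ spanning $\mathbb{R}^n$, write a basis of $\{\alpha\in\mathbb{R}^m:\sum\alpha_ix_i=0\}$ as the rows of an $(m-n)\times m$ matrix; its columns $\overline X=(\overline x_1,\dots,\overline x_m)$ form a linear transform of $X$. If $X$ positively spans $\mathbb{R}^n$, then $\operatorname{pos}\overline X$ is a strongly convex cone; choose a hyperplane $H$ not through $0$ meeting each ray $\{a\overline x_i:a>0\}$, at a point $\widehat x_i$; $\widehat X=(\widehat x_1,\dots,\widehat x_m)$ is a Shephard diagram of $X$. For a complete fan $\Sigma$ and points $x_i$ on its 1-cones, this is a Shephard diagram for $\Sigma$. A subsequence $Y$ of $X$ is a coface of $\Sigma$ if $\operatorname{pos}(X\setminus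 Y)$ is a cone of $\Sigma$; $\widehat X|_Y$ denotes the corresponding subsequence of $\widehat X$, and $S(\Sigma,\widehat X)=\bigcap_{Y\text{ coface of }\Sigma}\operatorname{relint}\operatorname{conv}\widehat X|_Y$. *)

From HB Require Import structures.
From mathcomp Require Import all_boot all_order all_algebra.
From mathcomp Require Import reals.
Set Implicit Arguments. Unset Strict Implicit. Unset Printing Implicit Defensive.
Import Order.TTheory GRing.Theory Num.Theory.
Local Open Scope ring_scope.

Section Defs.
Variable R : realType.

Section Complexes.
Variable V : finType.

Definition is_complex (K : {set {set V}}) : Prop :=
  set0 \in K /\ (forall F G : {set V}, F \in K -> G \subset F -> G \in K).

Definition vertices (K : {set {set V}}) : {set V} := [set v | [set v] \in K].

Definition link (K : {set {set V}}) (v : V) : {set {set V}} :=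
  [set F in K | (v \notin F) && ((v |: F) \in K)].

Definition deletion (K : {set {set V}}) (v : V) : {set {set V}} :=
  [set F in K | v \notin F].

Definition cjoin (A B : {set {set V}}) : {set {set V}} :=
  [set F :|: G | F in A, G in B].
End Complexes.

(* wed_1(K) for K on the vertices {1,...,m} of 'I_m.+1: the vertex 1 of K is
   replaced by the two new vertices 0 and 1 (I = {0,1}). *)
Definition v1 (m : nat) : 'I_m.+1 := inord 1.

Definition wed1 (m : nat) (K : {set {set 'I_m.+1}}) : {set {set 'I_m.+1}} :=
  cjoin (powerset [set ord0; v1 m]) (link K (v1 m))
  :|: cjoin [set set0; [set ord0]; [set v1 m]] (deletion K (v1 m)).

Section Fans.
Variables (V : finType) (n : nat).

Definition pos (x : V -> 'rV[R]_n) (F : {set V}) (y : 'rV[R]_n) : Prop :=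
  exists c : V -> R, (forall i, 0 <= c i) /\ y = \sum_(i in F) c i *: x i.

Definition lin_indep (x : V -> 'rV[R]_n) (F : {set V}) : Prop :=
  forall c : V -> R, \sum_(i in F) c i *: x i = 0 -> forall i, i \in F -> c i = 0.

Definition complete_fan (L : {set {set V}}) (x : V -> 'rV[R]_n) : Prop :=
  [/\ is_complex L,
      (forall F, F \in L -> lin_indep x F),
      (forall F G, F \in L -> G \in L ->
         forall y, (pos x F y /\ pos x G y) <-> pos x (F :&: G) y)
    & (forall y, exists2 F, F \in L & pos x F y)].

(* a fan, as the collection of its cones (cones are subsets of R^n) *)
Definition fan_of (L : {set {set V}}) (x : V -> 'rV[R]_n)
  (C : 'rV[R]_n -> Prop) : Prop :=
  exists2 F, F \in L & forall y, C y <-> pos x F y.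
End Fans.

Definition fan_like (V : finType) (K : {set {set V}}) : Prop :=
  exists (n : nat) (x : V -> 'rV[R]_n), complete_fan K x.

(* P : R^n -> R^M (y |-> y *m P) realizes the quotient R^n / span v *)
Definition quotient_map (n M : nat) (v : 'rV[R]_n) (P : 'M[R]_(n, M)) : Prop :=
  (forall y : 'rV[R]_n, y *m P = 0 <-> exists c : R, y = c *: v) /\
  (forall z : 'rV[R]_M, exists y : 'rV[R]_n, z = y *m P).

(* projected fan proj_v Sigma in R^n/span v (realized as R^M via P):
   images of the cones of Sigma containing the 1-cone pos{v} *)
Definition proj_fan (n M : nat) (Sig : ('rV[R]_n -> Prop) -> Prop)
  (v : 'rV[R]_n) (P : 'M[R]_(n, M)) (C' : 'rV[R]_M -> Prop) : Prop :=
  exists C, [/\ Sig C, (forall a : R, 0 <= a -> C (a *: v))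
               & forall z, C' z <-> exists y, C y /\ z = y *m P].

Section Shephard.
Variables (k n d : nat).

(* the rows of A form a basis of the space of linear dependences of X *)
Definition lin_transform (X : 'I_k -> 'rV[R]_n) (A : 'M[R]_(d, k)) : Prop :=
  [/\ (forall y : 'rV[R]_n, exists c : 'I_k -> R, y = \sum_i c i *: X i),
      (forall b : 'rV[R]_d, b *m A = 0 -> b = 0)
    & (forall a : 'rV[R]_k,
         \sum_i a 0 i *: X i = 0 <-> exists b : 'rV[R]_d, a = b *m A)].

Definition pos_spans (X : 'I_k -> 'rV[R]_n) : Prop :=
  forall y : 'rV[R]_n, exists c : 'I_k -> R,
    (forall i, 0 <= c i) /\ y = \sum_i c i *: X i.

Definition dotr (y l : 'rV[R]_d) : R := (y *m l^T) 0 0.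

(* Xhat is a Shephard diagram of X: Xhat_i is the intersection of the ray
   through the i-th column of a linear transform of X with an affine
   hyperplane H = {y | <y,l> = 1} not through 0 *)
Definition shephard (X : 'I_k -> 'rV[R]_n) (Xhat : 'I_k -> 'rV[R]_d) : Prop :=
  pos_spans X /\
  exists A : 'M[R]_(d, k), lin_transform X A /\
  exists l : 'rV[R]_d, l != 0 /\
    forall i, (exists a : R, 0 < a /\ Xhat i = a *: (col i A)^T) /\
              dotr (Xhat i) l = 1.

Definition conv (Xh : 'I_k -> 'rV[R]_d) (Y : {set 'I_k}) (p : 'rV[R]_d) : Prop :=
  exists lam : 'I_k -> R, [/\ (forall i, i \in Y -> 0 <= lam i),
    \sum_(i in Y) lam i = 1 & p = \sum_(i in Y) lam i *: Xh i].

Definition coface (Sig : ('rV[R]_n -> Prop) -> Prop) (X : 'I_k -> 'rV[R]_n)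
  (Y : {set 'I_k}) : Prop :=
  exists C, Sig C /\ forall y, C y <-> pos X (~: Y) y.
End Shephard.

Definition aff_hull (d : nat) (C : 'rV[R]_d -> Prop) (q : 'rV[R]_d) : Prop :=
  exists (l : nat) (s : 'I_l -> 'rV[R]_d) (mu : 'I_l -> R),
    [/\ forall i, C (s i), \sum_i mu i = 1 & q = \sum_i mu i *: s i].

Definition relint (d : nat) (C : 'rV[R]_d -> Prop) (p : 'rV[R]_d) : Prop :=
  C p /\ exists e : R, 0 < e /\
    forall q, aff_hull C q -> (forall j, `|q 0 j - p 0 j| < e) -> C q.

Definition S_set (k n d : nat) (Sig : ('rV[R]_n -> Prop) -> Prop)
  (X : 'I_k -> 'rV[R]_n) (Xhat : 'I_k -> 'rV[R]_d) (p : 'rV[R]_d) : Prop :=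
  forall Y : {set 'I_k}, coface Sig X Y -> relint (conv Xhat Y) p.
End Defs.

From HB Require Import structures.
From mathcomp Require Import all_boot all_order all_algebra.
From mathcomp Require Import reals.
Set Implicit Arguments. Unset Strict Implicit. Unset Printing Implicit Defensive.
Import Order.TTheory GRing.Theory Num.Theory.
Local Open Scope ring_scope.

(* Projecting along x_v turns a linear transform of X into one of the projected
   vectors by deleting its v-th column, so the Shephard points are unchanged;
   and the cofaces of proj_v Sigma are exactly the cofaces of Sigma avoiding v.
   This gives the two Shephard diagrams, the inclusion of S(Sigma) in both
   projected S-sets, and the reverse inclusion at every coface Y of Sigma that
   misses vertex 0 or vertex 1.  If Y contains both, the wedge structure makes
   Y \ {0} a coface avoiding 0; its complement is a face, hence independent,
   so conv Xhat|_(Y \ {0}) already affinely spans the hyperplane of the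
   diagram and its relative interior lies in that of conv Xhat|_Y. *)

Section Sums.
Variables (R : realType) (V : finType) (W : lmodType R).
Implicit Types (F G : {set V}) (c : V -> R) (f : V -> W).

Lemma big_restrict (T : nmodType) F G (g : V -> T) : G \subset F ->
  \sum_(i in F) (if i \in G then g i else 0) = \sum_(i in G) g i.
Proof.
move=> sGF; rewrite -big_mkcondr; apply: eq_bigl => i.
by rewrite andb_idl // => /(subsetP sGF).
Qed.

Lemma sum_restrict_scale F G c f : G \subset F ->
  \sum_(i in F) (if i \in G then c i else 0) *: f i = \sum_(i in G) c i *: f i.
Proof.
move=> sGF; rewrite -(big_restrict _ sGF).
by apply: eq_bigr => i _; case: ifP; rewrite ?scale0r.
Qed.

Lemma sum_delta_scale F f v : v \in F -> \sum_(i in F) (i == v)%:R *: f i = f v.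
Proof.
move=> vF; rewrite (bigD1 v) //= eqxx scale1r big1 ?addr0 // => i /andP[_ /negbTE ->].
by rewrite scale0r.
Qed.

End Sums.

Section Cones.
Variables (R : realType) (V : finType) (n : nat) (x : V -> 'rV[R]_n).
Implicit Types (F G : {set V}) (y : 'rV[R]_n).

Lemma pos_sub F G y : F \subset G -> pos x F y -> pos x G y.
Proof.
move=> sFG [c [c0 ->]]; exists (fun i => if i \in F then c i else 0); split.
  by move=> i; case: ifP.
by rewrite sum_restrict_scale.
Qed.

Lemma pos_scale F v a : v \in F -> 0 <= a -> pos x F (a *: x v).
Proof.
move=> vF a0; exists (fun i => a * (i == v)%:R); split.
  by move=> i; rewrite mulr_ge0.
by rewrite -(sum_delta_scale x vF) scaler_sumr; apply: eq_bigr => i _; rewrite scalerA.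
Qed.

Lemma pos_vec F v : v \in F -> pos x F (x v).
Proof. by move=> vF; rewrite -[x v]scale1r; apply: pos_scale. Qed.

Lemma pos_add F y z : pos x F y -> pos x F z -> pos x F (y + z).
Proof.
case=> [c [c0 ->]] [e [e0 ->]]; exists (fun i => c i + e i); split.
  by move=> i; rewrite addr_ge0.
by rewrite -big_split; apply: eq_bigr => i _; rewrite scalerDl.
Qed.

Lemma pos_set0 y : pos x set0 y -> y = 0.
Proof. by case=> c [_ ->]; rewrite big_set0. Qed.

Lemma pos_set1 v y : pos x [set v] y -> exists a : R, y = a *: x v.
Proof. by case=> c [_ ->]; rewrite big_set1; exists (c v). Qed.

End Cones.

Section CompleteFan.
Variables (R : realType) (V : finType) (n : nat) (x : V -> 'rV[R]_n).
Variable L : {set {set V}}.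
Hypotheses (fanL : complete_fan L x) (vertL : forall v, [set v] \in L).
Implicit Types (F G : {set V}) (y : 'rV[R]_n).

Lemma fan_face_closed F G : F \in L -> G \subset F -> G \in L.
Proof. by case: fanL => -[_ closedL] _ _ _; apply: closedL. Qed.

Lemma fan_lin_indep F : F \in L -> lin_indep x F.
Proof. by case: fanL => _ indepL _ _; apply: indepL. Qed.

Lemma fan_pos_setI F G y : F \in L -> G \in L -> pos x F y -> pos x G y ->
  pos x (F :&: G) y.
Proof. by case: fanL => _ _ capL _ FL GL Fy Gy; apply/capL. Qed.

Lemma fan_vec_neq0 v : x v != 0.
Proof.
apply/eqP => xv0; have := @fan_lin_indep _ (vertL v) (fun=> 1).
rewrite big_set1 scale1r xv0 => /(_ erefl v); rewrite set11 => /(_ isT)/eqP.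
by rewrite oner_eq0.
Qed.

Lemma fan_vec_neq_scale v u s : u != v -> [set v; u] \in L -> x u != s *: x v.
Proof.
move=> uv vuL; apply/eqP => exu.
have := @fan_lin_indep _ vuL (fun i => if i == u then 1 else - s).
rewrite big_setU1 ?inE 1?eq_sym //= big_set1 eqxx (negbTE uv).
rewrite scale1r exu scaleNr addNr => /(_ erefl u).
by rewrite !inE eqxx orbT => /(_ isT)/eqP; rewrite oner_eq0.
Qed.

Lemma fan_mem_of_pos F v : F \in L -> pos x F (x v) -> v \in F.
Proof.
move=> FL xvF; apply: contraT => vF.
have : pos x (F :&: [set v]) (x v).
  by apply: fan_pos_setI => //; apply: pos_vec; rewrite set11.
rewrite (_ : F :&: _ = set0) => [/pos_set0/eqP|].
  by rewrite (negbTE (fan_vec_neq0 v)).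
by apply/setP => i; rewrite !inE; apply: contraNF vF => /andP[iF /eqP <-].
Qed.

(* For t < 0, y = x u - t x v lies in the cones of both F and {v, u}, hence
   in the cone of {v}, making x u and x v collinear. *)
Lemma fan_mem_of_pos_line F v u y t : F \in L -> v \in F -> [set v; u] \in L ->
  pos x F y -> x u = y + t *: x v -> u \in F.
Proof.
move=> FL vF vuL Fy exu; apply: contraT => uF.
have [t_ge0 | t_lt0] := lerP 0 t.
  have : pos x F (x u) by rewrite exu; apply: pos_add => //; apply: pos_scale.
  by move/(fan_mem_of_pos FL); rewrite (negbTE uF).
have : pos x (F :&: [set v; u]) y.
  apply: fan_pos_setI => //; rewrite (_ : y = x u + (- t) *: x v); last first.
    by rewrite exu scaleNr addrK.
  by apply: pos_add; [apply: pos_vec | apply: pos_scale];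
    rewrite ?inE ?eqxx ?orbT // oppr_ge0 ltW.
have sFv : F :&: [set v; u] \subset [set v].
  apply/subsetP => i; rewrite !inE => /andP[iF /orP[//|/eqP eiu]].
  by rewrite -eiu iF in uF.
case/(pos_sub sFv)/pos_set1 => a ea.
have uv : u != v by apply: contraNneq uF => ->.
have := fan_vec_neq_scale (a + t) uv vuL.
by rewrite exu ea scalerDl eqxx.
Qed.

Lemma fan_face_eq F G : F \in L -> (forall y, pos x F y <-> pos x G y) -> F = G.
Proof.
move=> FL eFG; have sGF : G \subset F.
  by apply/subsetP => v vG; apply: fan_mem_of_pos => //; apply/eFG/pos_vec.
apply/eqP; rewrite eqEsubset sGF andbT; apply/subsetP => v vF.
have [c [_ exv]] : pos x G (x v) by apply/eFG/pos_vec.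
pose d i := (if i \in G then c i else 0) - (i == v)%:R.
have : \sum_(i in F) d i *: x i = 0.
  rewrite /d; under eq_bigr do rewrite scalerBl.
  by rewrite sumrB sum_restrict_scale // sum_delta_scale // -exv subrr.
move/(fan_lin_indep FL)/(_ v vF); rewrite /d eqxx.
by case: ifP => // _; rewrite sub0r => /eqP; rewrite oppr_eq0 oner_eq0.
Qed.

End CompleteFan.

Lemma coface_fan_of (R : realType) (k n : nat) (x : 'I_k -> 'rV[R]_n) L Y :
  complete_fan L x -> (forall v, [set v] \in L) ->
  coface (fan_of L x) x Y <-> ~: Y \in L.
Proof.
move=> fanL vertL; split=> [[C [[F FL eC] eY]] | YL]; last first.
  by exists (pos x (~: Y)); split=> //; exists (~: Y).
suff <- : F = ~: Y by [].
by apply: (fan_face_eq fanL vertL FL) => y; rewrite -eC eY.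
Qed.

Section LiftSets.
Variables (n : nat) (v : 'I_n.+1).
Implicit Types (F G : {set 'I_n.+1}) (H : {set 'I_n}).

Lemma mem_imset_lift H j : (lift v j \in lift v @: H) = (j \in H).
Proof. exact/mem_imset/lift_inj. Qed.

Lemma notin_imset_lift H : v \notin lift v @: H.
Proof. by apply/imsetP => -[j _ /eqP]; rewrite (negbTE (neq_lift v j)). Qed.

Lemma preimset_lift_imset H : lift v @^-1: (lift v @: H) = H.
Proof. by apply/setP => j; rewrite inE mem_imset_lift. Qed.

Lemma preimset_lift_setU1 H : lift v @^-1: (v |: lift v @: H) = H.
Proof.
by apply/setP => j; rewrite !inE mem_imset_lift eq_sym (negbTE (neq_lift v j)).
Qed.

Lemma eq_set_lift F G : (v \in F) = (v \in G) ->
  lift v @^-1: F = lift v @^-1: G -> F = G.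
Proof.
move=> eFGv /setP eFG; apply/setP => i; case: (unliftP v i) => [j|] -> //.
by have := eFG j; rewrite !inE.
Qed.

End LiftSets.

Lemma eq_relint (R : realType) (d : nat) (C D : 'rV[R]_d -> Prop) p :
  (forall q, C q <-> D q) -> relint C p -> relint D p.
Proof.
move=> eCD [Cp [e [e_gt0 ballC]]]; split; first exact/eCD.
exists e; split=> // q [l [s [mu [Cs mu1 ->]]]] near_q; apply/eCD/ballC => //.
by exists l, s, mu; split=> // i; apply/eCD.
Qed.

Section ConvexHulls.
Variables (R : realType) (k d : nat) (Xh : 'I_k -> 'rV[R]_d).
Implicit Types (Y : {set 'I_k}).

Lemma conv_vec Y i : i \in Y -> conv Xh Y (Xh i).
Proof.
move=> iY; exists (fun j => (j == i)%:R); split.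
- by move=> j _; rewrite ler0n.
- by rewrite (bigD1 i) //= eqxx big1 ?addr0 // => j /andP[_ /negbTE ->].
by rewrite sum_delta_scale.
Qed.

Lemma conv_subset Y0 Y q : Y0 \subset Y -> conv Xh Y0 q -> conv Xh Y q.
Proof.
move=> sY [lam [lam_ge0 lam1 ->]]; exists (fun i => if i \in Y0 then lam i else 0).
split=> [i _||].
- by case: ifP => // /lam_ge0.
- by rewrite big_restrict.
by rewrite sum_restrict_scale.
Qed.

End ConvexHulls.

Lemma conv_imset_lift (R : realType) (k d : nat) (Xh : 'I_k.+1 -> 'rV[R]_d)
  (v : 'I_k.+1) (Y : {set 'I_k}) q :
  conv Xh (lift v @: Y) q <-> conv (fun j => Xh (lift v j)) Y q.
Proof.
have liftY_inj : {in Y &, injective (lift v)} by move=> i j _ _; apply: lift_inj.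
split=> [[lam [lam_ge0 lam1 ->]] | [lam [lam_ge0 lam1 ->]]].
  exists (fun j => lam (lift v j)); split=> [j jY||].
  - by apply: lam_ge0; rewrite mem_imset_lift.
  - by rewrite -lam1 (big_imset _ liftY_inj).
  - by rewrite (big_imset _ liftY_inj).
exists (fun i => oapp lam 0 (unlift v i)); split=> [_ /imsetP[j jY ->]||].
- by rewrite /= liftK; apply: lam_ge0.
- by rewrite (big_imset _ liftY_inj); under eq_bigr do rewrite liftK.
- by rewrite (big_imset _ liftY_inj); under eq_bigr do rewrite liftK.
Qed.

Section Quotient.
Variables (R : realType) (k N M : nat) (x : 'I_k.+1 -> 'rV[R]_N).
Variables (v : 'I_k.+1) (P : 'M[R]_(N, M)).
Hypothesis quotP : quotient_map (x v) P.
Let X' (j : 'I_k) := x (lift v j) *m P.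
Implicit Types (F : {set 'I_k.+1}) (z : 'rV[R]_M).

Lemma quotient_map_vec0 : x v *m P = 0.
Proof. by apply/quotP.1; exists 1; rewrite scale1r. Qed.

Lemma mulmx_sum_lift (Q : pred 'I_k.+1) (c : 'I_k.+1 -> R) : Q v ->
  (\sum_(i | Q i) c i *: x i) *m P = \sum_(j | Q (lift v j)) c (lift v j) *: X' j.
Proof.
move=> Qv; rewrite mulmx_suml (bigD1_ord v) //= -scalemxAl quotient_map_vec0.
by rewrite scaler0 add0r; apply: eq_bigr => j _; rewrite -scalemxAl.
Qed.

Lemma pos_quotient F z : v \in F ->
  (exists y, pos x F y /\ z = y *m P) <-> pos X' (lift v @^-1: F) z.
Proof.
move=> vF; split=> [[y [[c [c0 ->]] ->]] | [c [c0 ->]]].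
  exists (fun j => c (lift v j)); split=> [j|]; first exact: c0.
  by rewrite mulmx_sum_lift //; apply: eq_bigl => j; rewrite inE.
exists (\sum_(i in F) oapp c 0 (unlift v i) *: x i); split.
  by exists (fun i => oapp c 0 (unlift v i)); split=> // i; case: unlift.
by rewrite mulmx_sum_lift //; apply: eq_big => [j|j _]; rewrite ?inE ?liftK.
Qed.

Hypothesis xv_neq0 : x v != 0.

Lemma lin_transform_quotient d (A : 'M[R]_(d, k.+1)) :
  lin_transform x A -> lin_transform X' (col' v A).
Proof.
case=> spanX Ainj depX.
have colA b j : (b *m col' v A) 0 j = (b *m A) 0 (lift v j).
  by rewrite !mxE; apply: eq_bigr => i _; rewrite mxE.
split.
- move=> z; have [y ->] := quotP.2 z; have [c ->] := spanX y.
  by exists (fun j => c (lift v j)); rewrite (mulmx_sum_lift (Q := fun=> true)).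
- move=> b /rowP b0; apply: Ainj.
  have bA_lift j : (b *m A) 0 (lift v j) = 0 by rewrite -colA b0 mxE.
  have : \sum_i (b *m A) 0 i *: x i = 0 by apply/depX; exists b.
  rewrite (bigD1_ord v) //= big1 ?addr0 => [|j _]; last by rewrite bA_lift scale0r.
  move/eqP; rewrite scaler_eq0 (negbTE xv_neq0) orbF => /eqP bAv.
  apply/rowP => i; rewrite [RHS]mxE.
  by case: (unliftP v i) => [j|] ->; rewrite ?bA_lift ?bAv.
move=> a; split=> [a0 | [b ->]].
  have /quotP.1 [t et] : (\sum_j a 0 j *: x (lift v j)) *m P = 0.
    by rewrite mulmx_suml -[RHS]a0; apply: eq_bigr => j _; rewrite -scalemxAl.
  have [b ea] : exists b, \row_i oapp (a 0) (- t) (unlift v i) = b *m A.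
    apply/depX; rewrite (bigD1_ord v) //= mxE unlift_none /=.
    rewrite (eq_bigr (fun j => a 0 j *: x (lift v j))) => [|j _].
      by rewrite et scaleNr addNr.
    by rewrite mxE liftK.
  by exists b; apply/rowP => j; rewrite colA -ea mxE liftK.
have : (\sum_i (b *m A) 0 i *: x i) *m P = 0.
  by rewrite (proj2 (depX _)) ?mul0mx //; exists b.
rewrite (mulmx_sum_lift (Q := fun=> true)) // => sum0.
by rewrite -[RHS]sum0; apply: eq_bigr => j _; rewrite colA.
Qed.

Lemma shephard_quotient d (Xhat : 'I_k.+1 -> 'rV[R]_d) :
  shephard x Xhat -> shephard X' (fun j => Xhat (lift v j)).
Proof.
case=> posX [A [xA [l [l_neq0 XhatA]]]]; split.
  move=> z; have [y ->] := quotP.2 z; have [c [c0 ->]] := posX y.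
  exists (fun j => c (lift v j)); split=> //.
  by rewrite (mulmx_sum_lift (Q := fun=> true)).
exists (col' v A); split; first exact: lin_transform_quotient.
exists l; split=> // j; have [[a [a0 ea]] dl] := XhatA (lift v j).
split=> //; exists a; split=> //; rewrite ea; congr (_ *: _^T).
by apply/matrixP => i i'; rewrite !mxE.
Qed.

Variable L : {set {set 'I_k.+1}}.
Hypotheses (fanL : complete_fan L x) (vertL : forall i, [set i] \in L).
Hypothesis edgeL : forall u, [set v; u] \in L.

Lemma fan_mem_of_pos_quotient F u : F \in L -> v \in F ->
  pos X' (lift v @^-1: F) (X' u) -> lift v u \in F.
Proof.
move=> FL vF /(pos_quotient _ vF) [y [Fy eyu]].
have /quotP.1 [t et] : (x (lift v u) - y) *m P = 0 by rewrite mulmxBl -eyu subrr.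
apply: (fan_mem_of_pos_line fanL vertL FL vF (edgeL _) Fy (t := t)).
by rewrite -et addrC subrK.
Qed.

Lemma fan_quotient_face_eq F (H : {set 'I_k}) : F \in L -> v \in F ->
  (forall z, pos X' (lift v @^-1: F) z <-> pos X' H z) -> lift v @^-1: F = H.
Proof.
move=> FL vF eFH; have sHF : H \subset lift v @^-1: F.
  apply/subsetP => h hH; rewrite inE; apply: fan_mem_of_pos_quotient => //.
  by apply/eFH/pos_vec.
apply/eqP; rewrite eqEsubset sHF andbT; apply/subsetP => g gF.
have F'L : v |: lift v @: H \in L.
  apply: (fan_face_closed fanL FL); rewrite subUset sub1set vF.
  by apply/subsetP => _ /imsetP[h hH ->]; have := subsetP sHF h hH; rewrite inE.
have : pos X' (lift v @^-1: (v |: lift v @: H)) (X' g).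
  by rewrite preimset_lift_setU1; apply/eFH/pos_vec.
move/(fan_mem_of_pos_quotient F'L (setU11 _ _)).
by rewrite !inE eq_sym (negbTE (neq_lift v g)) mem_imset_lift.
Qed.

Lemma coface_proj_fan Y : coface (proj_fan (fan_of L x) (x v) P) X' Y <->
  ~: (lift v @: Y) \in L.
Proof.
split=> [[C' [[C [[F FL eC] Cv eC']] eY]] | YL].
  have vF : v \in F.
    by apply: (fan_mem_of_pos fanL vertL FL); apply/eC; rewrite -[x v]scale1r; apply: Cv.
  have eFY : lift v @^-1: F = ~: Y.
    apply: fan_quotient_face_eq => // z; rewrite -(pos_quotient _ vF) -eY eC'.
    by split=> -[y [Cy ->]]; exists y; split=> //; apply/eC.
  suff -> : ~: (lift v @: Y) = F by [].
  apply: (@eq_set_lift _ v); first by rewrite in_setC notin_imset_lift vF.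
  by rewrite preimsetC preimset_lift_imset eFY.
have vF : v \in ~: (lift v @: Y) by rewrite in_setC notin_imset_lift.
exists (pos X' (~: Y)); split=> //; exists (pos x (~: (lift v @: Y))); split.
- by exists (~: (lift v @: Y)).
- by move=> a a0; apply: pos_scale.
by move=> z; rewrite (pos_quotient _ vF) preimsetC preimset_lift_imset.
Qed.

Lemma S_set_proj_fan d (Xhat : 'I_k.+1 -> 'rV[R]_d) p :
  S_set (fan_of L x) x Xhat p ->
  S_set (proj_fan (fan_of L x) (x v) P) X' (fun j => Xhat (lift v j)) p.
Proof.
move=> SXp Y /coface_proj_fan /(coface_fan_of _ fanL vertL) /SXp.
exact/eq_relint/conv_imset_lift.
Qed.

Lemma relint_conv_of_S_set_proj_fan d (Xhat : 'I_k.+1 -> 'rV[R]_d) Y p :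
  ~: Y \in L -> v \notin Y ->
  S_set (proj_fan (fan_of L x) (x v) P) X' (fun j => Xhat (lift v j)) p ->
  relint (conv Xhat Y) p.
Proof.
move=> YL vY SXp; have eY : lift v @: (lift v @^-1: Y) = Y.
  apply: (@eq_set_lift _ v); rewrite ?preimset_lift_imset //.
  by rewrite (negbTE vY) (negbTE (notin_imset_lift _ _)).
rewrite -eY in YL *; apply: eq_relint (SXp _ _) => [q|].
  exact: iff_sym (conv_imset_lift Xhat v _ q).
exact/coface_proj_fan.
Qed.

End Quotient.

Lemma dotrZ (R : realType) (d : nat) (l y : 'rV[R]_d) a :
  dotr (a *: y) l = a * dotr y l.
Proof. by rewrite /dotr -scalemxAl mxE. Qed.

Lemma dotr_sum (R : realType) (d : nat) (l : 'rV[R]_d) (I : finType) (Q : pred I)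
  (mu : I -> R) (y : I -> 'rV[R]_d) :
  dotr (\sum_(i | Q i) mu i *: y i) l = \sum_(i | Q i) mu i * dotr (y i) l.
Proof.
by rewrite /dotr mulmx_suml summxE; apply: eq_bigr => i _; rewrite -dotrZ.
Qed.

Section ShephardHyperplane.
Variables (R : realType) (k N d : nat) (x : 'I_k -> 'rV[R]_N).
Variables (Xhat : 'I_k -> 'rV[R]_d) (A : 'M[R]_(d, k)) (l : 'rV[R]_d).
Hypothesis xA : lin_transform x A.
Hypothesis XhatA : forall i,
  (exists a : R, 0 < a /\ Xhat i = a *: (col i A)^T) /\ dotr (Xhat i) l = 1.
Implicit Types (Y : {set 'I_k}) (p q : 'rV[R]_d).

Lemma conv_dotr Y q : conv Xhat Y q -> dotr q l = 1.
Proof.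
case=> lam [_ lam1 ->]; rewrite dotr_sum -lam1.
by apply: eq_bigr => i _; rewrite (XhatA i).2 mulr1.
Qed.

Lemma aff_hull_conv_dotr Y q : aff_hull (conv Xhat Y) q -> dotr q l = 1.
Proof.
case=> n [s [mu [Cs mu1 ->]]]; rewrite (dotr_sum _ xpredT) -mu1.
by apply: eq_bigr => i _; rewrite (conv_dotr (Cs i)) mulr1.
Qed.

(* If b *m A vanishes on Y0, it is a dependence of x supported on the
   independent set ~: Y0. *)
Lemma cols_span_of_lin_indep Y0 : lin_indep x (~: Y0) ->
  forall q, exists gamma : 'I_k -> R, q = \sum_(i in Y0) gamma i *: (col i A)^T.
Proof.
case: xA => _ Ainj depX indepY0 q.
pose AY := A *m diag_mx (\row_i (i \in Y0)%:R).
have AYE b i : (b *m AY) 0 i = (b *m A) 0 i * (i \in Y0)%:R.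
  by rewrite /AY mulmxA mul_mx_diag !mxE.
have : row_free AY.
  apply: inj_row_free => b /rowP bAY0; apply: Ainj.
  have bA_Y0 i : i \in Y0 -> (b *m A) 0 i = 0.
    by move=> iY0; have := bAY0 i; rewrite AYE iY0 mulr1 => ->; rewrite mxE.
  have : \sum_i (b *m A) 0 i *: x i = 0 by apply/depX; exists b.
  rewrite (bigID (mem Y0)) /= big1 ?add0r => [dep|i /bA_Y0 ->]; last by rewrite scale0r.
  apply/rowP => i; rewrite [RHS]mxE; have [/bA_Y0 //|iY0] := boolP (i \in Y0).
  apply: (indepY0 (fun i => (b *m A) 0 i)); rewrite ?inE //.
  by rewrite -[RHS]dep; apply: eq_bigl => j; rewrite inE.
rewrite /row_free -mxrank_tr => /eqP rkAY.
have /submxP [D ->] : (q <= AY^T)%MS by apply: submx_full; rewrite /row_full rkAY.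
exists (D 0); apply/rowP => j; rewrite !mxE summxE [RHS]big_mkcond /=.
apply: eq_bigr => i _; rewrite /AY [_^T i j]mxE mul_mx_diag !mxE.
by case: (i \in Y0); rewrite ?mulr1 ?mulr0.
Qed.

Lemma col_scale_Xhat i : (col i A)^T = dotr (col i A)^T l *: Xhat i.
Proof.
have [[a [_ ea]] Xl] := XhatA i.
by rewrite ea scalerA mulrC -dotrZ -ea Xl scale1r.
Qed.

Lemma aff_hull_conv_of_dotr Y0 p q : lin_indep x (~: Y0) -> conv Xhat Y0 p ->
  dotr q l = 1 -> aff_hull (conv Xhat Y0) q.
Proof.
move=> indepY0 Y0p ql1; have [gamma eq] := cols_span_of_lin_indep indepY0 q.
pose beta i := gamma i * dotr (col i A)^T l.
have eqb : q = \sum_(i in Y0) beta i *: Xhat i.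
  by rewrite eq; apply: eq_bigr => i _; rewrite {1}col_scale_Xhat scalerA.
exists k, (fun i => if i \in Y0 then Xhat i else p).
exists (fun i => if i \in Y0 then beta i else 0); split.
- by move=> i; case: ifP => // /conv_vec.
- rewrite -big_mkcond -[RHS]ql1 eqb dotr_sum.
  by apply: eq_bigr => i _; rewrite (XhatA i).2 mulr1.
by rewrite eqb big_mkcond; apply: eq_bigr => i _; case: ifP; rewrite ?scale0r.
Qed.

(* The affine hull of conv Xhat|_Y0 is the whole hyperplane containing
   conv Xhat|_Y, so a relative neighbourhood of p in the former is one in the
   latter. *)
Lemma relint_conv_subset Y0 Y p : lin_indep x (~: Y0) -> Y0 \subset Y ->
  relint (conv Xhat Y0) p -> relint (conv Xhat Y) p.
Proof.
move=> indepY0 sY0Y [Y0p [e [e_gt0 ballY0]]]; split; first exact: conv_subset Y0p.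
exists e; split=> // q affq near_q; apply: (conv_subset sY0Y); apply: ballY0 near_q.
exact: aff_hull_conv_of_dotr Y0p (aff_hull_conv_dotr affq).
Qed.

End ShephardHyperplane.

Lemma mem_cjoin (V : finType) (A B : {set {set V}}) F G :
  F \in A -> G \in B -> F :|: G \in cjoin A B.
Proof. exact: imset2_f. Qed.

Section Wedge.
Variables (m : nat) (K : {set {set 'I_m.+1}}).
Hypotheses (m_gt0 : (0 < m)%N) (cxK : is_complex K).
Hypothesis vertK : vertices K = [set i : 'I_m.+1 | i != ord0].

Lemma v1_neq0 : v1 m != ord0.
Proof. by rewrite -val_eqE /= /v1 inordK. Qed.

Lemma vertex_K i : i != ord0 -> [set i] \in K.
Proof. by move=> i0; have /[!inE] : i \in vertices K by rewrite vertK inE. Qed.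

Lemma set0_link : set0 \in link K (v1 m).
Proof. by rewrite !inE (proj1 cxK) setU0 vertex_K ?v1_neq0. Qed.

Lemma vertex_deletion h : h \notin [set ord0; v1 m] -> [set h] \in deletion K (v1 m).
Proof. by rewrite !inE negb_or => /andP[h0 h1]; rewrite vertex_K // eq_sym. Qed.

Lemma wed1_edge a h : a \in [set ord0; v1 m] -> [set a; h] \in wed1 K.
Proof.
move=> aI; rewrite /wed1 in_setU; case: (boolP (h \in [set ord0; v1 m])) => hI.
  apply/orP; left; rewrite -[[set a; h]]setU0; apply: mem_cjoin set0_link.
  by rewrite powersetE subUset !sub1set aI hI.
apply/orP; right; apply: mem_cjoin (vertex_deletion hI).
by move: aI; rewrite !inE => /orP[] /eqP ->; rewrite eqxx ?orbT.
Qed.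

Lemma wed1_vertex i : [set i] \in wed1 K.
Proof.
case: (boolP (i \in [set ord0; v1 m])) => iI.
  by rewrite -[[set i]]setUid; apply: wed1_edge.
rewrite /wed1 in_setU -[[set i]]set0U; apply/orP; right.
by apply: mem_cjoin (vertex_deletion iI); rewrite !inE eqxx.
Qed.

Lemma wed1_setU0 F : F \in wed1 K -> ord0 \notin F -> v1 m \notin F ->
  ord0 |: F \in wed1 K.
Proof.
rewrite /wed1 !in_setU => /orP[] /imset2P[A B AI BK ->] A0 A1; apply/orP.
  left; rewrite setUA; apply: mem_cjoin BK.
  by move: AI; rewrite !powersetE subUset sub1set !inE eqxx => ->.
right; move: AI; rewrite !inE => /orP[/orP[]|] /eqP eA.
- by rewrite eA set0U; apply: mem_cjoin BK; rewrite !inE eqxx orbT.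
- by rewrite eA setUA setUid; apply: mem_cjoin BK; rewrite !inE eqxx orbT.
by move: A1; rewrite eA !inE eqxx.
Qed.

End Wedge.

Unset Implicit Arguments. Set Strict Implicit. Set Printing Implicit Defensive.

Theorem proposition5p9 (R : realType) (m : nat) (K : {set {set 'I_m.+1}})
  (N d M0 M1 : nat) (x : 'I_m.+1 -> 'rV[R]_N) (Xhat : 'I_m.+1 -> 'rV[R]_d)
  (P0 : 'M[R]_(N, M0)) (P1 : 'M[R]_(N, M1)) :
  (0 < m)%N ->
  fan_like R K ->
  vertices K = [set i : 'I_m.+1 | i != ord0] ->
  complete_fan (wed1 K) x ->
  shephard x Xhat ->
  quotient_map (x ord0) P0 ->
  quotient_map (x (v1 m)) P1 ->
  let Sig := fan_of (wed1 K) x in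
  let X0 := fun j : 'I_m => x (lift ord0 j) *m P0 in
  let X1 := fun j : 'I_m => x (lift (v1 m) j) *m P1 in
  let Xhat0 := fun j : 'I_m => Xhat (lift ord0 j) in
  let Xhat1 := fun j : 'I_m => Xhat (lift (v1 m) j) in
  [/\ shephard X0 Xhat0,
      shephard X1 Xhat1
    & forall p : 'rV[R]_d,
        S_set Sig x Xhat p <->
        (S_set (proj_fan Sig (x ord0) P0) X0 Xhat0 p /\
         S_set (proj_fan Sig (x (v1 m)) P1) X1 Xhat1 p)].
Proof.
move=> m_gt0 [n [y [cxK _ _ _]]] vertK fanW shX quot0 quot1 /=.
have vertW := wed1_vertex m_gt0 cxK vertK.
have edge0W h : [set ord0; h] \in wed1 K.
  by apply: (wed1_edge m_gt0 cxK vertK); rewrite !inE eqxx.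
have edge1W h : [set v1 m; h] \in wed1 K.
  by apply: (wed1_edge m_gt0 cxK vertK); rewrite !inE eqxx orbT.
have x_neq0 := fan_vec_neq0 fanW vertW.
split; [exact (shephard_quotient quot0 (x_neq0 _) shX)
       | exact (shephard_quotient quot1 (x_neq0 _) shX) | move=> p; split].
  move=> SXp; split.
    exact (S_set_proj_fan quot0 fanW vertW edge0W SXp).
  exact (S_set_proj_fan quot1 fanW vertW edge1W SXp).
case=> S0p S1p Y /(coface_fan_of _ fanW vertW) YW.
have [Y_0 | nY_0] := boolP (ord0 \in Y); last first.
  exact (relint_conv_of_S_set_proj_fan quot0 fanW vertW edge0W YW nY_0 S0p).
have [Y_1 | nY_1] := boolP (v1 m \in Y); last first.
  exact (relint_conv_of_S_set_proj_fan quot1 fanW vertW edge1W YW nY_1 S1p).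
have YW' : ~: (Y :\ ord0) \in wed1 K.
  by rewrite setCD setUC; apply: wed1_setU0; rewrite // inE negbK.
have [_ [A [xA [l [_ XhatA]]]]] := shX.
apply: (relint_conv_subset xA XhatA (fan_lin_indep fanW YW') (subD1set Y ord0)).
apply: (relint_conv_of_S_set_proj_fan quot0 fanW vertW edge0W YW') S0p.
by rewrite !inE eqxx.
Qed.
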